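(* Let $\mathcal{T}$ be an MPQ-tree of an interval graph $G=(V,E)$ and let $x\neq y$ be vertices with $node(x)=node(y)=P$, where $P$ is a P-node that is a leaf of $\mathcal{T}$. Then $(x,y)$ is an interval edge, i.e. $G-(x,y)$ is an interval graph.
   Context: Graphs are finite and simple; for $G=(V,E)$ and $e\in E$, $G-e=(V,E\setminus\{e\})$. An edge $(x,y)\in E$ of an interval graph $G$ is an interval edge if $G-(x,y)$ is an interval graph. An MPQ-tree of an interval graph $G=(V,E)$, $V=\{1,\dots,n\}$, is a rooted plane tree whose nodes are P-nodes and Q-nodes. Each P-node carries a (possibly empty) set of vertices. A Q-node has $k\ge 3$ ordered positions $1,\dots,k$; position $i$ carries a set $S_i\subseteq V$ (the $i$-th section) and a child subtree $T_i$, which may be empty. Every vertex $v$ is assigned to exactly one node $node(v)$: either $v$ lies in the set of the P-node $node(v)$, or $node(v)$ is a Q-node and $v$ lies exactly in the sections $S_{l(v)},\dots,S_{r(v)}$ of it, with $l(v)<r(v)$. For a node with child subtrees $T_1,\dots,T_k$, $V_i$ denotes the set of vertices assigned to nodes of $T_i$ ($V_i=\emptyset$ if $T_i$ is empty). The maximal cliques of $G$ are in bijection with the descending paths from the root which at a P-node continue into one of its children (stopping if there is none) and at a Q-node choose a position $i$ and continue into $T_i$ (stopping if $T_i$ is empty); the clique is the union of the sets of the visited P-nodes and the chosen sections. Reading these cliques left to right gives a linear order of the maximal cliques, and the orders obtained this way after arbitrarily permuting children of P-nodes and reversing the positions of Q-nodes are exactly the orders of the maximal cliques of $G$ in which the cliques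 containing any fixed vertex are consecutive. Moreover, for every Q-node with sections $S_1,\dots,S_k$: (a) $V_1\neq\emptyset$ and $V_k\ne\emptyset$; (b) $S_1\subseteq S_2$ and $S_k\subseteq S_{k-1}$; (c) $S_{i-1}\cap S_i\neq\emptyset$ for $2\le i\le k$; (d) $S_{i-1}\neq S_i$ for $2\le i\le k$; (e) $(S_i\cap S_{i+1})\setminus S_1\neq\emptyset$ and $(S_{i-1}\cap S_i)\setminus S_k\neq\emptyset$ for $2\le i\le k-1$; (f) $(S_{i-1}\cup V_{i-1})\setminus S_i\neq\emptyset$ and $(S_i\cup V_i)\setminus S_{i-1}\neq\emptyset$ for $2\le i\le k$; and further (g) no empty P-node has an empty P-node as its parent, (h) no P-node has exactly one child whose root is a P-node, (i) every child subtree of a P-node is nonempty. *)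

From HB Require Import structures.
From mathcomp Require Import all_boot.
From Stdlib Require List.
Set Implicit Arguments. Unset Strict Implicit. Unset Printing Implicit Defensive.

Section Graphs.
Variable T : finType.

Definition simple_graph (e : rel T) : Prop := symmetric e /\ irreflexive e.

Definition del_edge (e : rel T) (x y : T) : rel T :=
  fun a b => e a b && ~~ (((a == x) && (b == y)) || ((a == y) && (b == x))).

(* Interval graph: vertices can be assigned closed intervals [l, r] (l <= r)
   such that distinct vertices are adjacent iff their intervals intersect.
   (Integer endpoints suffice for finite graphs.) *)
Definition interval_graph (e : rel T) : Prop :=
  exists f : T -> nat * nat,
    (forall v, (f v).1 <= (f v).2) /\
    (forall u v, u != v ->
       (e u v <-> maxn (f u).1 (f v).1 <= minn (f u).2 (f v).2)).

Definition clique (e : rel T) (C : {set T}) : bool :=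
  [forall x in C, forall y in C, (x != y) ==> e x y].

Definition maximal_clique (e : rel T) (C : {set T}) : Prop :=
  clique e C /\ forall D : {set T}, clique e D -> C \subset D -> D = C.

(* A P-node carries a set and a (possibly empty) list of
   nonempty child subtrees; a Q-node carries a list of positions, each with
   a section S_i and an optional (possibly empty) child subtree T_i. *)
Inductive mpq : Type :=
| PNode : {set T} -> seq mpq -> mpq
| QNode : seq ({set T} * option mpq) -> mpq.

Fixpoint subnodes (t : mpq) : seq mpq :=
  t :: match t with
       | PNode _ cs => flatten (map subnodes cs)
       | QNode ss => flatten (map (fun p => let: (_, o) := p in
                        match o with Some c => subnodes c | None => [::] end) ss)
       end.

Definition nodeset (n : mpq) : {set T} :=
  match n with
  | PNode X _ => X
  | QNode ss => foldr (fun p A => p.1 :|: A) set0 ss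
  end.

Definition verts (t : mpq) : {set T} :=
  foldr (fun n A => nodeset n :|: A) set0 (subnodes t).

Definition occ (v : T) (t : mpq) : nat :=
  count (fun n => v \in nodeset n) (subnodes t).

(* cliques obtained from the descending paths, read left to right *)
Fixpoint cliques (t : mpq) : seq {set T} :=
  match t with
  | PNode X [::] => [:: X]
  | PNode X cs => [seq X :|: C | C <- flatten (map cliques cs)]
  | QNode ss => flatten (map (fun p => let: (Sx, o) := p in
        match o with
        | None => [:: Sx]
        | Some c => [seq Sx :|: C | C <- cliques c]
        end) ss)
  end.

Definition choices (A : Type) (ls : seq (seq A)) : seq (seq A) :=
  foldr (fun xs acc => [seq x :: a | x <- xs, a <- acc]) [:: [::]] ls.

(* all left-to-right clique orders obtained after arbitrarily permuting the
   children of P-nodes and reversing the positions of Q-nodes *)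
Fixpoint orders (t : mpq) : seq (seq {set T}) :=
  match t with
  | PNode X [::] => [:: [:: X]]
  | PNode X cs =>
      [seq map (setU X) (flatten p) | l <- choices (map orders cs),
                                      p <- permutations l]
  | QNode ss =>
      let opts := map (fun p => let: (Sx, o) := p in
                    match o with
                    | None => [:: [:: Sx]]
                    | Some c => [seq map (setU Sx) s | s <- orders c]
                    end) ss in
      [seq flatten l | l <- choices opts] ++
      [seq flatten (rev l) | l <- choices opts]
  end.

Definition consecutive_clique_order (e : rel T) (s : seq {set T}) : Prop :=
  uniq s /\ (forall C, C \in s <-> maximal_clique e C) /\
  (forall v i j k, i <= j -> j <= k -> k < size s ->
     v \in nth set0 s i -> v \in nth set0 s k -> v \in nth set0 s j).

Definition sec (ss : seq ({set T} * option mpq)) (i : nat) : {set T} :=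
  (nth (set0, None) ss i).1.

Definition subV (ss : seq ({set T} * option mpq)) (i : nat) : {set T} :=
  match (nth (set0, None) ss i).2 with Some c => verts c | None => set0 end.

Definition node_ok (n : mpq) : Prop :=
  match n with
  | PNode X cs =>
      (X = set0 -> forall c, List.In c cs ->
                   forall Y ds, c = PNode Y ds -> Y <> set0) /\
      (forall c, cs = [:: c] -> forall Y ds, c <> PNode Y ds)
      (* (i) holds by construction: children of P-nodes are trees *)
  | QNode ss =>
      let k := size ss in
      let S := sec ss in
      let V := subV ss in
      3 <= k /\
      (forall v, v \in nodeset n -> exists l r, l < r /\ r < k /\
          forall i, i < k -> (v \in S i) = (l <= i <= r)) /\
      V 0 != set0 /\ V k.-1 != set0 /\
      S 0 \subset S 1 /\ S k.-1 \subset S k.-2 /\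
      (* (c),(d),(f) for 2 <= i <= k (1-indexed) *)
      (forall i, 1 <= i < k ->
         S i.-1 :&: S i != set0 /\ S i.-1 != S i /\
         (S i.-1 :|: V i.-1) :\: S i != set0 /\
         (S i :|: V i) :\: S i.-1 != set0) /\
      (* (e) for 2 <= i <= k-1 (1-indexed) *)
      (forall i, 1 <= i -> i <= k.-2 ->
         (S i :&: S i.+1) :\: S 0 != set0 /\
         (S i.-1 :&: S i) :\: S k.-1 != set0)
  end.

Definition is_MPQ_tree (e : rel T) (t : mpq) : Prop :=
  (forall v, occ v t = 1) /\
  (forall n, List.In n (subnodes t) -> node_ok n) /\
  uniq (cliques t) /\ (forall C, C \in cliques t <-> maximal_clique e C) /\
  (forall s, s \in orders t <-> consecutive_clique_order e s).

Definition same_leaf_Pnode (t : mpq) (x y : T) : Prop :=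
  exists X : {set T}, List.In (PNode X [::]) (subnodes t) /\ x \in X /\ y \in X.

End Graphs.

From HB Require Import structures.
From mathcomp Require Import all_boot zify.
From Stdlib Require List.
Set Implicit Arguments. Unset Strict Implicit. Unset Printing Implicit Defensive.

(* Some descending path passes through the leaf, so some
      clique C of the tree contains X.  Since x is assigned to a single node,
      C is the only clique of the tree that contains x; likewise for y.
   2. Graph part.  A vertex lying in a unique maximal clique C has all its
      neighbours in C (every edge extends to a maximal clique); so x, y are
      simplicial with closed neighbourhood C, and in particular adjacent.
   3. Interval part.  In an interval model the intervals of a clique share a
      point p (the largest left endpoint); for the simplicial x, y, a vertex z
      is a neighbour iff its interval contains p.  Scaling the model by 3 and
      giving x the point 3p and y the point 3p+1 separates exactly x from y,
      so G - (x,y) is an interval graph. *)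

(* Membership in List.In form, used for the node lists of an MPQ-tree
   (mpq has no decidable equality). *)
Lemma In_flatten_map (A B : Type) (f : A -> seq B) (s : seq A) (y : B) :
  List.In y (flatten (map f s)) -> exists a, List.In a s /\ List.In y (f a).
Proof.
elim: s => [|a s IH] //= /List.in_app_iff [Hy|Hy]; first by exists a; auto.
by case: (IH Hy) => b [Hb Hyb]; exists b; auto.
Qed.

Lemma mem_flatten_map (A : Type) (B : eqType) (f : A -> seq B) (s : seq A) a y :
  List.In a s -> y \in f a -> y \in flatten (map f s).
Proof.
elim: s => [|b s IH] //= [->|Ha] Hy; rewrite mem_cat ?Hy //.
by rewrite IH ?orbT.
Qed.

Lemma In_count (A : Type) (p : pred A) s a : List.In a s -> p a -> 0 < count p s.
Proof.
elim: s => [|b s IH] //= [->|Ha] Pa; first by rewrite Pa.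
by rewrite addn_gt0 IH ?orbT.
Qed.

Lemma In_sumn (A : Type) (o : A -> nat) s a : List.In a s -> o a <= sumn (map o s).
Proof.
elim: s => [|b s IH] //= [->|Ha]; first by rewrite leq_addr.
exact: leq_trans (IH Ha) (leq_addl _ _).
Qed.

Lemma sumn0_In (A : Type) (o : A -> nat) s a :
  sumn (map o s) = 0 -> List.In a s -> o a = 0.
Proof. by move=> Hs Ha; have := In_sumn o Ha; rewrite Hs; lia. Qed.

Lemma sumn0_all (A : Type) (g : A -> nat) s :
  (forall a, List.In a s -> g a = 0) -> sumn (map g s) = 0.
Proof. by elim: s => [|b s IH] //= Hg; rewrite Hg ?IH //; auto; left. Qed.

Lemma sumn1_transfer (A : Type) (s : seq A) (o g : A -> nat) (L : A -> Prop) :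
  sumn (map o s) = 1 -> (exists a, List.In a s /\ L a) ->
  (forall a, List.In a s -> L a -> 0 < o a) ->
  (forall a, List.In a s -> L a -> o a = 1 -> g a = 1) ->
  (forall a, List.In a s -> o a = 0 -> g a = 0) -> sumn (map g s) = 1.
Proof.
elim: s => [|b s IH] /=; first by move=> _ [a [[]]].
move=> Hs [a [Ha La]] Lpos Lone Zero.
case Eo: (o b) => [|n].
  rewrite (Zero b (or_introl erefl) Eo) add0n.
  rewrite Eo add0n in Hs; apply: IH => //; last 3 first.
  - by move=> c Hc; apply: Lpos; right.
  - by move=> c Hc; apply: Lone; right.
  - by move=> c Hc; apply: Zero; right.
  case: Ha => [Eb|Ha]; last by exists a.
  by subst b; move: (Lpos a (or_introl erefl) La); rewrite Eo.
have Hs0 : sumn (map o s) = 0 by lia.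
have Eo1 : o b = 1 by lia.
case: Ha => [Eb|Ha]; last by have := Lpos a (or_intror Ha) La; rewrite (sumn0_In Hs0 Ha).
subst b; rewrite Lone //; last by left.
by rewrite sumn0_all // => c Hc; apply: Zero; [right|apply: sumn0_In Hs0 Hc].
Qed.

Lemma count1_eq (A : eqType) (p : pred A) s a b :
  count p s = 1 -> a \in s -> b \in s -> p a -> p b -> a = b.
Proof.
rewrite -size_filter => Hs Ha Hb Pa Pb.
have : a \in filter p s by rewrite mem_filter Pa.
have : b \in filter p s by rewrite mem_filter Pb.
by case: (filter p s) Hs => [|c [|]] //= _; rewrite !inE => /eqP -> /eqP ->.
Qed.

Section Tree.
Variable T : finType.
Implicit Types (t : mpq T) (v : T) (cs : seq (mpq T)) (X Y S : {set T}).
Implicit Type ss : seq ({set T} * option (mpq T)).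

Definition mpq_ind' (P : mpq T -> Prop)
  (HP : forall X cs, (forall c, List.In c cs -> P c) -> P (PNode X cs))
  (HQ : forall ss, (forall S c, List.In (S, Some c) ss -> P c) -> P (QNode ss)) :
  forall t, P t :=
  fix F t : P t := match t with
  | PNode X cs => HP X cs ((fix G cs : forall c, List.In c cs -> P c :=
       match cs with
       | [::] => fun c H => False_ind _ H
       | c0 :: cs' => fun c H => match H with
           | or_introl E => eq_ind c0 P (F c0) c E
           | or_intror H' => G cs' c H'
           end
       end) cs)
  | QNode ss => HQ ss ((fix G ss : forall S c, List.In (S, Some c) ss -> P c :=
       match ss with
       | [::] => fun S c H => False_ind _ H
       | (S0, o) :: ss' => fun S c H => match H with
           | or_introl E =>
              (match o as o' return ((S0, o') = (S, Some c) -> P c) with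
               | Some c0 => fun E => eq_ind c0 P (F c0) c (congr1 (fun p =>
                              if p.2 is Some d then d else c0) E)
               | None => fun E => match E in _ = q
                           return (if q.2 is Some _ then P c else True) with
                           | erefl => I
                           end
               end) E
           | or_intror H' => G ss' S c H'
           end
       end) ss)
  end.

Definition pos_cliques (p : {set T} * option (mpq T)) : seq {set T} :=
  let: (Sx, o) := p in
  if o is Some c then [seq Sx :|: C | C <- cliques c] else [:: Sx].
Definition pos_occ v (p : {set T} * option (mpq T)) : nat :=
  if p.2 is Some c then occ v c else 0.

Lemma cliquesP Y c cs : cliques (PNode Y (c :: cs)) =
  [seq Y :|: C | C <- flatten (map (@cliques T) (c :: cs))].
Proof. by []. Qed.

Lemma cliquesQ ss : cliques (QNode ss) = flatten (map pos_cliques ss).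
Proof. by []. Qed.

Lemma occP v Y cs : occ v (PNode Y cs) = (v \in Y) + sumn (map (occ v) cs).
Proof. by rewrite /occ /= count_flatten -map_comp. Qed.

Lemma occQ v ss :
  occ v (QNode ss) = (v \in nodeset (QNode ss)) + sumn (map (pos_occ v) ss).
Proof.
rewrite /occ /= count_flatten -map_comp; congr (_ + sumn _).
by apply: eq_map => -[S [c|]].
Qed.

Lemma section_sub_nodeset ss S o :
  List.In (S, o) ss -> S \subset nodeset (QNode ss).
Proof.
elim: ss => [|[S' o'] ss IH] //= [[-> _]|Hin]; first exact: subsetUl.
exact: subset_trans (IH Hin) (subsetUr _ _).
Qed.

Lemma count_setU v Y (l : seq {set T}) : v \notin Y ->
  count (fun C : {set T} => v \in C) [seq Y :|: C | C <- l] =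
  count (fun C : {set T} => v \in C) l.
Proof.
by move=> Hv; rewrite count_map; apply: eq_count => C /=; rewrite in_setU (negbTE Hv).
Qed.

Lemma occ0_count v t :
  occ v t = 0 -> count (fun C : {set T} => v \in C) (cliques t) = 0.
Proof.
elim/mpq_ind': t => [Y cs IH|ss IH].
  rewrite occP => Hocc.
  have HY : v \notin Y by apply/negP => HY; rewrite HY in Hocc.
  have Hs : sumn (map (occ v) cs) = 0 by lia.
  case: cs IH Hs {Hocc} => [|c cs] IH Hs; first by rewrite /= (negbTE HY).
  rewrite cliquesP count_setU // count_flatten -map_comp; apply: sumn0_all => c' Hc'.
  exact: IH Hc' (sumn0_In Hs Hc').
rewrite occQ => Hocc.
have HY : v \notin nodeset (QNode ss) by apply/negP => HY; rewrite HY in Hocc.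
have Hs : sumn (map (pos_occ v) ss) = 0 by lia.
rewrite cliquesQ count_flatten -map_comp; apply: sumn0_all => -[S o] Hin /=.
have HvS : v \notin S by apply: contra HY; apply/subsetP/(section_sub_nodeset Hin).
case: o Hin => [c|] Hin /=; last by rewrite (negbTE HvS).
by rewrite count_setU //; exact: IH Hin (sumn0_In Hs Hin).
Qed.

Lemma leaf_occ_pos X v t :
  List.In (PNode X [::]) (subnodes t) -> v \in X -> 0 < occ v t.
Proof. exact: In_count. Qed.

Lemma leaf_in_child X Y c cs : List.In (PNode X [::]) (subnodes (PNode Y (c :: cs))) ->
  exists c', List.In c' (c :: cs) /\ List.In (PNode X [::]) (subnodes c').
Proof. by case=> [//|Hl]; apply: (In_flatten_map Hl). Qed.

Lemma leaf_in_position X ss : List.In (PNode X [::]) (subnodes (QNode ss)) ->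
  exists S c, List.In (S, Some c) ss /\ List.In (PNode X [::]) (subnodes c).
Proof.
case=> [//|Hl]; case: (In_flatten_map Hl) => -[S [c|]] [Hin Hlc] //.
by exists S, c.
Qed.

(* The descending path ending at a leaf P-node yields a clique containing
   its set. *)
Lemma leaf_in_clique X t : List.In (PNode X [::]) (subnodes t) ->
  exists2 C, C \in cliques t & X \subset C.
Proof.
elim/mpq_ind': t => [Y cs IH|ss IH].
  case: cs IH => [|c cs] IH.
    by case=> [[->]|[]]; exists X; rewrite ?inE.
  case/leaf_in_child => c' [Hc' Hl]; case: (IH c' Hc' Hl) => C HC HX.
  exists (Y :|: C); last exact: subset_trans HX (subsetUr _ _).
  by rewrite cliquesP; apply: map_f; exact: mem_flatten_map Hc' HC.
case/leaf_in_position => S [c [Hc Hl]]; case: (IH S c Hc Hl) => C HC HX.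
exists (S :|: C); last exact: subset_trans HX (subsetUr _ _).
by rewrite cliquesQ; apply: (mem_flatten_map (a := (S, Some c))) => //=; apply: map_f.
Qed.

Lemma leaf_vertex_count X v t : List.In (PNode X [::]) (subnodes t) -> v \in X ->
  occ v t = 1 -> count (fun C : {set T} => v \in C) (cliques t) = 1.
Proof.
move=> Hl Hv; elim/mpq_ind': t Hl => [Y cs IH|ss IH] Hl.
  case: cs IH Hl => [|c cs] IH Hl.
    by case: Hl => [[->]|[]] _; rewrite /= Hv.
  case/leaf_in_child: (Hl) => c' [Hc' Hl'].
  have := In_sumn (occ v) Hc'; have := leaf_occ_pos Hl' Hv.
  rewrite occP => Hpos Hle Hocc.
  have HY : v \notin Y by apply/negP => HY; rewrite HY in Hocc; lia.
  have Hs : sumn (map (occ v) (c :: cs)) = 1 by lia.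
  rewrite cliquesP count_setU // count_flatten -map_comp.
  apply: (sumn1_transfer (L := fun c => List.In (PNode X [::]) (subnodes c)) Hs).
  - by exists c'.
  - by move=> a _ La; apply: leaf_occ_pos La Hv.
  - by move=> a Ha La Oa; apply: IH.
  - by move=> a _ Oa; apply: occ0_count.
case/leaf_in_position: (Hl) => S [c' [Hc' Hl']].
have Hle : occ v c' <= sumn (map (pos_occ v) ss) := In_sumn (pos_occ v) Hc'.
have Hpos := leaf_occ_pos Hl' Hv; rewrite occQ => Hocc.
have HY : v \notin nodeset (QNode ss) by apply/negP => HY; rewrite HY in Hocc; lia.
have Hs : sumn (map (pos_occ v) ss) = 1 by lia.
have HvS S0 o : List.In (S0, o) ss -> v \notin S0.
  by move=> Hin; apply: contra HY; apply/subsetP/(section_sub_nodeset Hin).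
rewrite cliquesQ count_flatten -map_comp.
apply: (sumn1_transfer (L := fun p => if p.2 is Some c
          then List.In (PNode X [::]) (subnodes c) else False) Hs).
- by exists (S, Some c').
- by move=> [S0 [c|]] _ La //=; apply: leaf_occ_pos La Hv.
- move=> [S0 [c|]] Ha La Oa //=.
  by rewrite count_setU ?(HvS _ _ Ha) //; apply: IH Ha La Oa.
- move=> [S0 [c|]] Ha Oa /=; last by rewrite (negbTE (HvS _ _ Ha)).
  by rewrite count_setU ?(HvS _ _ Ha) //; apply: occ0_count.
Qed.

Lemma leaf_clique_unique X v t C :
  occ v t = 1 -> List.In (PNode X [::]) (subnodes t) -> v \in X ->
  C \in cliques t -> X \subset C ->
  forall M, M \in cliques t -> v \in M -> M = C.
Proof.
move=> Hocc Hl Hv HC HXC M HM HvM.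
exact: count1_eq (leaf_vertex_count Hl Hv Hocc) HM HC HvM (subsetP HXC v Hv).
Qed.

End Tree.

Section Simplicial.
Variables (T : finType) (e : rel T).
Hypothesis e_sym : symmetric e.

Lemma clique_edge u z : e u z -> clique e [set u; z].
Proof.
move=> Huz; apply/forallP => a; apply/implyP; rewrite !inE => Ha.
apply/forallP => b; apply/implyP; rewrite !inE => Hb; apply/implyP.
by case/orP: Ha Hb => /eqP -> /orP [] /eqP ->; rewrite ?eqxx // e_sym.
Qed.

Lemma clique_in_maximal D : clique e D -> exists2 M, maximal_clique e M & D \subset M.
Proof.
move=> HD; have [M HM HDM] := maxset_exists (P := fun C => clique e C) HD.
exists M => //; split; first exact: maxsetp HM.
by move=> E HE HME; apply: maxsetsup HM HE HME.
Qed.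

Lemma neighbour_in_unique_clique u C :
  (forall M, maximal_clique e M -> u \in M -> M = C) ->
  forall z, e u z -> z \in C.
Proof.
move=> Huniq z Huz; have [M HM Hsub] := clique_in_maximal (clique_edge Huz).
rewrite -(Huniq M HM); last by apply: (subsetP Hsub); rewrite !inE eqxx.
by apply: (subsetP Hsub); rewrite !inE eqxx orbT.
Qed.

End Simplicial.

Lemma cliqueP (T : finType) (e : rel T) C a b :
  clique e C -> a \in C -> b \in C -> a != b -> e a b.
Proof.
move=> /forallP /(_ a) /implyP Ha aC bC ab.
by move: (Ha aC) => /forallP /(_ b) /implyP /(_ bC) /implyP; apply.
Qed.

Lemma del_edgeC (T : finType) (e : rel T) x y u v :
  symmetric e -> del_edge e x y u v = del_edge e x y v u.
Proof. by move=> e_sym; rewrite /del_edge e_sym (andbC (v == x)) (andbC (v == y)) orbC. Qed.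

Definition meets (I J : nat * nat) : bool := maxn I.1 J.1 <= minn I.2 J.2.

Definition stabs (p : nat) (I : nat * nat) : bool := I.1 <= p <= I.2.

Lemma meetsC I J : meets I J = meets J I.
Proof. by rewrite /meets maxnC minnC. Qed.

Lemma meets_stabs p I J : stabs p I -> stabs p J -> meets I J.
Proof. rewrite /stabs /meets; lia. Qed.

(* Scaling by 3, with the right endpoint pushed by one, preserves
   intersections and leaves room for the points 3p and 3p+1. *)
Definition scale (I : nat * nat) : nat * nat := (3 * I.1, 3 * I.2 + 1).
Definition pin (q : nat) : nat * nat := (q, q).

Lemma meets_scale I J : meets (scale I) (scale J) = meets I J.
Proof. by apply/idP/idP; rewrite /meets /=; lia. Qed.

Lemma meets_pin_scale p r I : r <= 1 -> meets (pin (3 * p + r)) (scale I) = stabs p I.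
Proof. by move=> Hr; apply/idP/idP; rewrite /meets /stabs /=; lia. Qed.

Lemma meets_pin a b : meets (pin a) (pin b) = (a == b).
Proof. by apply/idP/eqP; rewrite /meets /=; lia. Qed.

Section IntervalModel.
Variables (T : finType) (e : rel T) (f : T -> nat * nat).
Hypothesis f_interval : forall v, (f v).1 <= (f v).2.
Hypothesis f_model : forall u v, u != v -> (e u v <-> meets (f u) (f v)).

Lemma f_modelb u v : u != v -> e u v = meets (f u) (f v).
Proof. by move=> Huv; apply/idP/idP => /(f_model Huv). Qed.

(* Helly property on the line: the largest left endpoint of a clique lies in
   all of its intervals. *)
Lemma clique_common_point C : clique e C ->
  exists p, forall v, v \in C -> stabs p (f v).
Proof.
move=> HC; exists (\max_(w in C) (f w).1) => v Hv; apply/andP; split.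
  exact: (@leq_bigmax_cond _ (fun w => w \in C) (fun w => (f w).1)).
apply/bigmax_leqP => w Hw; have [->|Hwv] := eqVneq w v; first exact: f_interval.
by move: (f_model Hwv).1 (cliqueP HC Hw Hv Hwv); rewrite /meets; lia.
Qed.

Lemma simplicial_stabs C p u :
  clique e C -> u \in C -> (forall z, e u z -> z \in C) ->
  (forall v, v \in C -> stabs p (f v)) ->
  forall z, z != u -> e u z = stabs p (f z).
Proof.
move=> HC Hu Hnb Hp z Hzu; rewrite eq_sym in Hzu; apply/idP/idP => [/Hnb|Hz].
  exact: Hp.
exact/(f_model Hzu)/meets_stabs/Hz/Hp.
Qed.

(* Two vertices adjacent exactly to the vertices stabbed by p can be split
   apart: giving them the distinct points 3p and 3p+1 in the scaled model
   represents G - (x,y). *)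
Lemma split_twins x y p : symmetric e -> x != y ->
  (forall z, z != x -> e x z = stabs p (f z)) ->
  (forall z, z != y -> e y z = stabs p (f z)) ->
  interval_graph (del_edge e x y).
Proof.
move=> e_sym Hxy Hx Hy.
pose g v := if v == x then pin (3 * p) else if v == y then pin (3 * p + 1)
            else scale (f v).
exists g; split.
  by move=> v; rewrite /g; case: ifP => _ //; case: ifP => _ //=; have := f_interval v; lia.
move=> u v Huv; suff -> : del_edge e x y u v = meets (g u) (g v) by [].
have Hyx : y != x by rewrite eq_sym.
wlog Hu : u v Huv / [|| u == x, u == y | (v != x) && (v != y)].
  move=> Hwlog; case: (boolP [|| u == x, u == y | (v != x) && (v != y)]).
    exact: Hwlog.
  rewrite !negb_or negb_and !negbK => /and3P [Hux Huy Hv].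
  rewrite del_edgeC // meetsC; apply: Hwlog; first by rewrite eq_sym.
  by case/orP: Hv => ->; rewrite ?orbT.
rewrite /del_edge /g.
have [Eux|Hux] := eqVneq u x.
  subst u; have [Evx|Hvx] := eqVneq v x; first by rewrite Evx eqxx in Huv.
  have [->|Hvy] := eqVneq v y; first by rewrite /= andbF meets_pin; lia.
  by rewrite /= andbF andbT Hx 1?eq_sym // -(addn0 (3 * p)) meets_pin_scale.
have [Euy|Huy] := eqVneq u y.
  subst u; have [Evy|Hvy] := eqVneq v y; first by rewrite Evy eqxx in Huv.
  have [->|Hvx] := eqVneq v x; first by rewrite /= andbF meets_pin; lia.
  by rewrite /= andbT Hy 1?eq_sym // meets_pin_scale.
move: Hu; rewrite (negbTE Hux) (negbTE Huy) => /andP [/negbTE Hvx /negbTE Hvy].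
by rewrite Hvx Hvy /= andbT f_modelb // meets_scale.
Qed.

End IntervalModel.

Theorem mainTheorem3 (T : finType) (e : rel T) (t : mpq T) (x y : T) :
  simple_graph e -> interval_graph e -> is_MPQ_tree e t ->
  x != y -> same_leaf_Pnode t x y ->
  e x y /\ interval_graph (del_edge e x y).
Proof.
move=> [e_sym _] [f [f_interval f_model]] [Hocc [_ [_ [Hmax _]]]] Hxy [X [Hl [Hx Hy]]].
have [C HC HXC] := leaf_in_clique Hl.
have [clC _] := (Hmax C).1 HC.
(* C is the only maximal clique through x or y, so it contains their
   neighbours. *)
have neighbours v : v \in X -> forall z, e v z -> z \in C.
  move=> Hv z; apply: (neighbour_in_unique_clique e_sym) => M /(Hmax M).2 HM.
  exact: leaf_clique_unique (Hocc v) Hl Hv HC HXC M HM.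
have [p Hp] := clique_common_point f_interval f_model clC.
have stabs_nb v : v \in X -> forall z, z != v -> e v z = stabs p (f z).
  move=> Hv z.
  exact: (simplicial_stabs f_model clC (subsetP HXC v Hv) (neighbours v Hv) Hp).
split; first exact: cliqueP clC (subsetP HXC x Hx) (subsetP HXC y Hy) Hxy.
exact: (split_twins f_interval f_model e_sym Hxy (stabs_nb x Hx) (stabs_nb y Hy)).
Qed.
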